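(* Let $l\geq 2$ be an integer and let $n=\binom{2l+1}{l}+1$. Then $\chi'_{D_2}(\overleftrightarrow{K_n})<\chi'_{D_{1,2}}(\overleftrightarrow{K_n})$.
   Context: For a simple graph $G$, the symmetric digraph $\overleftrightarrow{G}$ is obtained by replacing each edge $uv$ of $G$ by the pair of opposite arcs $\overrightarrow{uv}$ and $\overrightarrow{vu}$; $K_n$ is the complete graph on $n$ vertices. A monochromatic 2-path is a pair of arcs $\overrightarrow{uv},\overrightarrow{vw}$ with $w\neq u$ of the same colour; a monochromatic 2-cycle is a pair $\overrightarrow{uv},\overrightarrow{vu}$ of the same colour. An arc-colouring is distinguishing if the only automorphism of $\overleftrightarrow{G}$ preserving the colour of every arc is the identity. $\chi'_{D_{1,2}}(\overleftrightarrow{G})$ is the least number of colours in a distinguishing arc-colouring with no monochromatic 2-cycles and no monochromatic 2-paths; $\chi'_{D_2}(\overleftrightarrow{G})$ is the least number of colours in a distinguishing arc-colouring with no monochromatic 2-paths. *)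

From mathcomp Require Import all_boot all_order all_fingroup.
Set Implicit Arguments. Unset Strict Implicit. Unset Printing Implicit Defensive.

(* A simple graph is a symmetric irreflexive relation e on a finite vertex type T.
   The symmetric digraph <->G has arc set {(u,v) | e u v}.
   An arc colouring with k colours is a function c : T -> T -> 'I_k
   (only its values on arcs (u,v) with e u v matter). *)

Section ArcColourings.
Variables (T : finType) (e : rel T).

Definition is_digraph_aut (s : {perm T}) : Prop :=
  forall u v, e (s u) (s v) = e u v.

Definition distinguishing (k : nat) (c : T -> T -> 'I_k) : Prop :=
  forall s : {perm T}, is_digraph_aut s ->
    (forall u v, e u v -> c (s u) (s v) = c u v) -> s = 1%g.

Definition no_mono_2path (k : nat) (c : T -> T -> 'I_k) : Prop :=
  forall u v w, e u v -> e v w -> w != u -> c u v != c v w.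

Definition no_mono_2cycle (k : nat) (c : T -> T -> 'I_k) : Prop :=
  forall u v, e u v -> c u v != c v u.

Definition D2_colourable (k : nat) : Prop :=
  exists c : T -> T -> 'I_k, distinguishing c /\ no_mono_2path c.

Definition D12_colourable (k : nat) : Prop :=
  exists c : T -> T -> 'I_k,
    [/\ distinguishing c, no_mono_2cycle c & no_mono_2path c].

End ArcColourings.

Definition is_least (P : nat -> Prop) (k : nat) : Prop :=
  P k /\ forall m, P m -> k <= m.

Definition Kn (n : nat) : rel 'I_n := fun u v => u != v.

Definition chiD2_is (T : finType) (e : rel T) (k : nat) := is_least (D2_colourable e) k.
Definition chiD12_is (T : finType) (e : rel T) (k : nat) := is_least (D12_colourable e) k.

From mathcomp Require Import all_boot all_order all_fingroup.
From mathcomp Require Import zify.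
From Stdlib Require Import Classical.
Set Implicit Arguments. Unset Strict Implicit. Unset Printing Implicit Defensive.

(** Lower bound: without monochromatic 2-cycles and 2-paths, the colour of uv
    is an out-colour of u but not of v, so the sets of out-colours of the n
    vertices of K_n form an antichain; by Sperner's theorem a palette of at most
    2l+1 colours carries at most C(2l+1, l) < n such sets.
    Upper bound: label the vertices by l-subsets L(v) of a 2l-set, each subset
    used once or twice, which is possible as C(2l, l) < n <= 2 C(2l, l). Colour
    uv by 0 if L(u) = L(v), and otherwise by an element of L(u) minus L(v). The
    nonzero out-colours of v are then exactly L(v), so an automorphism keeping
    the colours fixes every label, and a 2-path u v w cannot be monochromatic:
    either uv has a colour outside L(v), or u, v, w would be three vertices
    sharing a label. The two vertices sharing a label are told apart by the
    colours of their arcs towards a vertex labelled by the complement. *)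

Lemma leq_bin_succ n m : m < n - m -> 'C(n, m) <= 'C(n, m.+1).
Proof.
move=> lt_m; rewrite -(leq_pmul2l (ltn0Sn m)) mul_bin_left.
by rewrite leq_mul2r lt_m orbT.
Qed.

Lemma ltn_bin_succ n m : m.+1 < n - m -> 'C(n, m) < 'C(n, m.+1).
Proof.
move=> lt_m; rewrite -(ltn_pmul2l (ltn0Sn m)) mul_bin_left.
by rewrite ltn_pmul2r // bin_gt0; lia.
Qed.

Lemma leq_bin_half n m : 'C(n, m) <= 'C(n, n./2).
Proof.
have [le_mn|/bin_small-> //] := leqP m n.
wlog le_m_half : m le_mn / m <= n./2.
  move=> wlog_m; have [|lt_half_m] := leqP m n./2; first exact: wlog_m.
  by rewrite -bin_sub //; apply: wlog_m; lia.
have homo_bin := @homo_leq_in nat [pred i | i <= n./2] (fun i => 'C(n, i))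
  (fun a b => a <= b) leqnn leq_trans.
apply: homo_bin; rewrite ?inE //.
  by move=> i j; rewrite !inE => _ le_j_half k; rewrite inE; lia.
by move=> i _; rewrite inE => lt_i_half; apply: leq_bin_succ; lia.
Qed.

Lemma bin_half_homo : {homo (fun n => 'C(n, n./2)) : m n / m <= n}.
Proof.
apply: homo_leq => [//|x y z|n]; first exact: (@leq_trans x y z).
exact: leq_trans (leq_bin2l (n./2) (leqnSn n)) (leq_bin_half _ _).
Qed.

Lemma fact_half_min n m : m <= n -> (n./2)`! * (n - n./2)`! <= m`! * (n - m)`!.
Proof.
move=> le_mn; have le_half_n : n./2 <= n by lia.
rewrite -(@leq_pmul2l 'C(n, n./2)) ?bin_gt0 // bin_fact // -(bin_fact le_mn).
by rewrite leq_mul2r leq_bin_half orbT.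
Qed.

Section Sperner.
Variable T : finType.
Implicit Types (A B D : {set T}) (F : {set {set T}}).

Definition antichain F := {in F &, forall A B, A \subset B -> A = B}.

Lemma antichain_max F D :
  {in F, forall A, A \subset D} -> antichain F -> D \in F -> F = [set D].
Proof.
move=> subF antiF DF; apply/setP => A; rewrite inE.
by apply/idP/eqP => [AF|->//]; apply: antiF (subF A AF).
Qed.

(* The LYM inequality, multiplied through by k!. *)
Lemma lym_inequality k D F :
  #|D| = k -> {in F, forall A, A \subset D} -> antichain F ->
  \sum_(A in F) #|A|`! * (k - #|A|)`! <= k`!.
Proof.
elim: k D F => [|k IH] D F Dk subF antiF; have [DF|DnF] := boolP (D \in F);
  try by rewrite (antichain_max subF antiF DF) big_set1 Dk subnn fact0 muln1.
  rewrite big_pred0 // => A; apply: contraNF DnF => AF.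
  by have := subF A AF; rewrite (cards0_eq Dk) subset0 => /eqP <-.
have le_card_k A : A \in F -> #|A| <= k.
  move=> AF; rewrite -ltnS -Dk proper_card // properEneq subF // andbT.
  by apply: contraNneq DnF => <-.
have split_term A : A \in F ->
    #|A|`! * (k.+1 - #|A|)`! = \sum_(x in D | x \notin A) #|A|`! * (k - #|A|)`!.
  move=> AF; rewrite sum_nat_const.
  have -> : #|[pred x in D | x \notin A]| = #|D :\: A|.
    by apply: eq_card => x; rewrite !inE andbC.
  rewrite cardsDS ?subF // Dk subSn ?le_card_k // factS; lia.
rewrite (eq_bigr _ split_term).
rewrite (exchange_big_dep (mem D)) /=; last by move=> A x _ /andP[].
rewrite factS -[k.+1 in X in _ <= X]Dk -sum_nat_const.
apply: leq_sum => x xD.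
pose Fx := [set A in F | x \notin A].
apply: leq_trans (IH (D :\ x) Fx _ _ _).
- by apply: eq_leq; apply: eq_bigl => A; rewrite !inE xD.
- by move: Dk; rewrite (cardsD1 x D) xD add1n => -[].
- move=> A; rewrite inE => /andP [AF xnA]; apply/subsetP => y yA.
  by rewrite !inE (subsetP (subF A AF)) // andbT; apply: contraNneq xnA => <-.
- by move=> A B; rewrite !inE => /andP[AF _] /andP[BF _]; apply: antiF.
Qed.

Lemma sperner F : antichain F -> #|F| <= 'C(#|T|, #|T|./2).
Proof.
move=> antiF; set m := #|T|.
have le_half_m : m./2 <= m by lia.
have fact_prod_gt0 : 0 < (m./2)`! * (m - m./2)`! by rewrite muln_gt0 !fact_gt0.
rewrite -(leq_pmul2r fact_prod_gt0) bin_fact //.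
apply: leq_trans (lym_inequality (cardsT T) (fun A _ => subsetT A) antiF).
rewrite -sum_nat_const; apply: leq_sum => A _.
by apply: fact_half_min; rewrite /m -cardsT subset_leq_card ?subsetT.
Qed.

End Sperner.

Section OutColours.
Variables (T : finType) (e : rel T) (k : nat).
Implicit Types (c : T -> T -> 'I_k) (s : {perm T}).

Definition out_colours c v : {set 'I_k} := [set c v w | w in e v].

Lemma mem_out_colours c u v : e u v -> c u v \in out_colours c u.
Proof. by move=> euv; apply: imset_f. Qed.

Lemma out_colours_aut c s : is_digraph_aut e s ->
  (forall u v, e u v -> c (s u) (s v) = c u v) ->
  forall v, out_colours c (s v) = out_colours c v.
Proof.
move=> aut_s c_s v; apply/setP => i.
apply/imsetP/imsetP => -[w]; rewrite unfold_in => evw ->.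
  exists ((s^-1)%g w); first by rewrite unfold_in -aut_s permKV.
  by rewrite -{1}(permKV s w) c_s // -aut_s permKV.
by exists (s w); rewrite ?unfold_in ?aut_s ?c_s.
Qed.

Lemma out_colours_not_subset c u v :
  no_mono_2cycle e c -> no_mono_2path e c -> e u v ->
  ~~ (out_colours c u \subset out_colours c v).
Proof.
move=> no_cycle no_path euv; apply/subsetPn; exists (c u v).
  exact: mem_out_colours.
apply/imsetP => -[w]; rewrite unfold_in => evw /eqP; apply/negP.
have [->|wu] := eqVneq w u; first exact: no_cycle.
exact: no_path.
Qed.

End OutColours.

Lemma card_le_no_mono_complete (V : finType) k (c : V -> V -> 'I_k) :
  no_mono_2cycle (fun u v : V => u != v) c -> no_mono_2path (fun u v : V => u != v) c ->
  #|V| <= 'C(k, k./2).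
Proof.
move=> no_cycle no_path; set S := out_colours (fun u v : V => u != v) c.
have not_sub u v : u != v -> ~~ (S u \subset S v).
  exact: out_colours_not_subset.
have S_inj : injective S.
  by move=> u v eqS; apply: contraTeq (subxx (S v)) => /not_sub; rewrite eqS.
rewrite -cardsT -(card_imset _ S_inj).
have := @sperner _ (S @: setT); rewrite card_ord; apply.
move=> _ _ /imsetP[u _ ->] /imsetP[v _ ->] sub_uv.
by have [->|/not_sub/negP] := eqVneq u v.
Qed.

Lemma D12_Kn_lower n m : D12_colourable (@Kn n) m -> n <= 'C(m, m./2).
Proof.
case=> c [_ no_cycle no_path]; rewrite -[n]card_ord.
exact: card_le_no_mono_complete no_cycle no_path.
Qed.

Lemma oapp_lift0K n : cancel (oapp (lift ord0) (@ord0 n)) (unlift ord0).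
Proof. by case=> [i|] /=; rewrite ?liftK ?unlift_none. Qed.

Section SubsetColouring.
Variables (l : nat) (V : finType) (L : V -> {set 'I_(2 * l)}) (twin : V -> bool).
Hypotheses (l_ge2 : 2 <= l) (card_L : forall v, #|L v| = l)
  (L_twin_inj : injective (fun v => (L v, twin v)))
  (L_onto : forall X : {set 'I_(2 * l)}, #|X| = l -> exists v, L v = X).

(* Colour 0 stands for [None]. The boolean index selects the first or the second
   element of [L u :\: L v]; it is 1 only on arcs from a [twin] vertex to a
   vertex labelled by the complement of [L u]. *)
Definition subset_col u v : 'I_(2 * l).+1 :=
  oapp (lift ord0) ord0 (onth (enum (L u :\: L v)) ((L v == ~: L u) && twin u)).

Variant subset_col_spec u v : 'I_(2 * l).+1 -> Type :=
  | SubsetColSame of L u = L v : subset_col_spec u v ord0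
  | SubsetColDiff j of j \in L u & j \notin L v : subset_col_spec u v (lift ord0 j).

Lemma subset_colP u v : subset_col_spec u v (subset_col u v).
Proof.
rewrite /subset_col; have [eqL|neqL] := eqVneq (L u) (L v).
  by rewrite eqL setDv enum_set0 onth0n; constructor.
set i := _ && _.
have lt_i : i < size (enum (L u :\: L v)).
  rewrite -cardE /i; case: eqP => [->|_] /=.
    by rewrite setDE setCK setIid card_L; case: twin; lia.
  rewrite card_gt0 setD_eq0; apply: contra neqL => sub_uv.
  by rewrite eqEcard sub_uv !card_L leqnn.
have := onthTE (enum (L u :\: L v)) i; rewrite lt_i.
case Ei: onth => [j|] // _.
have : j \in enum (L u :\: L v) by apply/onthP; exists i.
by rewrite mem_enum inE => /andP[jnv ju]; constructor.
Qed.

Lemma subset_col_setC u w :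
  L w = ~: L u -> subset_col u w = oapp (lift ord0) ord0 (onth (enum (L u)) (twin u)).
Proof. by move=> Lw; rewrite /subset_col Lw eqxx setDE setCK setIid. Qed.

Lemma card_setC_L v : #|~: L v| = l.
Proof. by have := cardsC (L v); rewrite card_L card_ord; lia. Qed.

Lemma twin_neq u v : L u = L v -> u != v -> twin u != twin v.
Proof. by move=> eqL; apply: contra_neq => eqt; apply: L_twin_inj; rewrite eqL eqt. Qed.

Lemma lift_in_out_colours v (j : 'I_(2 * l)) :
  (lift ord0 j \in out_colours (fun u w : V => u != w) subset_col v) = (j \in L v).
Proof.
apply/imsetP/idP => [[w _]|jv].
  case: subset_colP => [_ /eqP|j' j'v _ /lift_inj -> //].
  by rewrite eq_sym (negbTE (neq_lift _ _)).
have /set0Pn[d dnv] : ~: L v != set0 by rewrite -card_gt0 card_setC_L; lia.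
rewrite inE in dnv.
have card_Y : #|d |: (L v :\ j)| = l.
  have := cardsD1 j (L v); rewrite jv card_L cardsU1 !inE (negbTE dnv) andbF /=.
  exact: esym.
have [w Lw] := L_onto card_Y.
have jnw : j \notin L w by rewrite Lw !inE eqxx /= orbF; apply: contraNneq dnv => <-.
exists w; first by rewrite unfold_in; apply: contraNneq jnw => <-.
case: subset_colP => [eqL|j' j'v]; first by rewrite -eqL jv in jnw.
by rewrite Lw !inE j'v andbT negb_or negbK => /andP[_ /eqP->].
Qed.

Lemma subset_col_distinguishing :
  distinguishing (fun u v : V => u != v) subset_col.
Proof.
move=> s aut_s col_s; apply/permP => v; rewrite perm1.
have L_s u : L (s u) = L u.
  apply/setP => j; rewrite -!lift_in_out_colours.
  by rewrite (out_colours_aut aut_s col_s).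
have [w Lw] := L_onto (card_setC_L v).
have vw : v != w.
  apply/eqP => eqvw; have /set0Pn[j jv] : L v != set0 by rewrite -card_gt0 card_L; lia.
  by move: (jv); rewrite {1}eqvw Lw inE jv.
have := col_s v w vw.
rewrite (subset_col_setC Lw) (@subset_col_setC (s v) (s w)) ?L_s //.
move=> /(can_inj (@oapp_lift0K _))/onth_inj.
rewrite enum_uniq -cardE card_L => /(_ isT) twin_s.
apply: L_twin_inj; rewrite /= L_s; congr pair.
have /twin_s : minn (twin v) (twin (s v)) < l.
  by apply: leq_ltn_trans (geq_minl _ _) _; case: (twin v); lia.
by case: (twin v); case: (twin (s v)).
Qed.

Lemma subset_col_no_mono_2path : no_mono_2path (fun u v : V => u != v) subset_col.
Proof.
move=> u v w uv vw wu.
case: subset_colP => [eqLuv|j _ jnv]; case: subset_colP => [eqLvw|j' j'v _].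
- have := twin_neq eqLuv uv; have := twin_neq eqLvw vw.
  have := twin_neq (etrans eqLuv eqLvw); rewrite eq_sym wu.
  by case: (twin u); case: (twin v); case: (twin w); move=> /(_ isT).
- exact: neq_lift.
- by rewrite eq_sym neq_lift.
- by rewrite (inj_eq lift_inj); apply: contraNneq jnv => ->.
Qed.

Lemma subset_col_D2 : D2_colourable (fun u v : V => u != v) (2 * l).+1.
Proof.
exists subset_col; split.
  exact: subset_col_distinguishing.
exact: subset_col_no_mono_2path.
Qed.

End SubsetColouring.

Lemma D2_Kn_upper l n :
  2 <= l -> 'C(2 * l, l) <= n <= 2 * 'C(2 * l, l) -> D2_colourable (@Kn n) (2 * l).+1.
Proof.
move=> l_ge2 /andP[le_Mn le_n2M]; set M := 'C(2 * l, l) in le_Mn le_n2M.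
pose es := enum [set X : {set 'I_(2 * l)} | #|X| == l].
have size_es : size es = M by rewrite -cardE card_draws card_ord.
pose idx (v : 'I_n) : nat := if v < M then nat_of_ord v else v - M.
have idx_lt v : idx v < M by rewrite /idx; have := ltn_ord v; case: (ltnP v M); lia.
apply: (@subset_col_D2 l _ (fun v => nth set0 es (idx v)) (fun v => M <= v)) => //.
- move=> v; have : nth set0 es (idx v) \in es by rewrite mem_nth ?size_es.
  by rewrite mem_enum inE => /eqP.
- move=> u v [/eqP]; rewrite nth_uniq ?size_es ?enum_uniq // => /eqP.
  rewrite /idx => eq_idx eq_twin; apply: val_inj => /=.
  by move: eq_idx eq_twin; case: (ltnP u M); case: (ltnP v M); lia.
- move=> X card_X.
  have X_es : X \in es by rewrite mem_enum inE card_X.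
  have lt_iM : index X es < M by rewrite -size_es index_mem.
  exists (Ordinal (leq_trans lt_iM le_Mn)).
  by rewrite /idx /= lt_iM nth_index.
Qed.

Lemma bin_odd_lt_double l : 0 < l -> 'C(2 * l + 1, l) < 2 * 'C(2 * l, l).
Proof.
case: l => // l _; rewrite addn1 binS.
have : 'C(2 * l.+1, l) < 'C(2 * l.+1, l.+1) by apply: ltn_bin_succ; lia.
lia.
Qed.

Lemma D12_colourable_complete (V : finType) :
  1 < #|V| -> D12_colourable (fun u v : V => u != v) #|{: V * V}|.
Proof.
move=> card_V; exists (fun u v => enum_rank (u, v)); split.
- move=> s _ col_s; apply/permP => u; rewrite perm1.
  have /set0Pn[v] : [set~ u] != set0 by rewrite -card_gt0 cardsC1; lia.
  by rewrite !inE eq_sym => /col_s /enum_rank_inj [].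
- by move=> u v uv; rewrite (inj_eq enum_rank_inj) xpair_eqE (negbTE uv).
- by move=> u v w uv _ _; rewrite (inj_eq enum_rank_inj) xpair_eqE (negbTE uv).
Qed.

Lemma is_least_exists (P : nat -> Prop) : (exists k, P k) -> exists k, is_least P k.
Proof.
move=> [k Pk]; elim/ltn_ind: k Pk => k IH Pk.
have [min_k|] := classic (forall m, P m -> k <= m); first by exists k.
case/not_all_ex_not => m nm; have [Pm /negP] := imply_to_and _ _ nm.
by rewrite -ltnNge => /IH; apply.
Qed.

Theorem proposition4p5 (l : nat) (hl : 2 <= l) :
  let n := 'C(2 * l + 1, l) + 1 in
  exists k1 k2 : nat,
    [/\ chiD2_is (@Kn n) k1, chiD12_is (@Kn n) k2 & k1 < k2].
Proof.
move=> n; have l_gt0 : 0 < l by lia.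
have D2n : D2_colourable (@Kn n) (2 * l).+1.
  apply: D2_Kn_upper => //; apply/andP; split.
    exact: leq_trans (leq_bin2l l (leq_addr 1 _)) (leq_addr 1 _).
  by rewrite /n addn1; apply: bin_odd_lt_double.
have [k1 least_k1] := is_least_exists (ex_intro _ _ D2n).
have card_n : 1 < #|'I_n| by rewrite card_ord /n addn1 ltnS bin_gt0; lia.
have [k2 least_k2] := is_least_exists (ex_intro _ _ (D12_colourable_complete card_n)).
exists k1, k2; split => //; apply: leq_ltn_trans (least_k1.2 _ D2n) _.
rewrite ltnNge; apply/negP => le_k2.
have := leq_trans (D12_Kn_lower least_k2.1) (bin_half_homo le_k2).
by rewrite /n !addn1 /= mul2n uphalf_double ltnn.
Qed.
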